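(* Let $\mu_{T}$ be the Möbius function of the poset $T_d$ of types of degree $d$. If $\tau\in T_d$ is ramified, then $\mu_T(\tau,(d^1))=0$.
   Context: A type of degree $d$ is a finite multiset of pairs $(b,m)$ of positive integers with $\sum bm=d$. $T_d$ is the set of types of degree $d$ with the partial order generated by elementary merges (replace two pairs $(d_1,m),(d_2,m)$ with equal second entry by $(d_1+d_2,m)$) and elementary forgets (replace a pair $(d_1,m_1)$ by $(d_1,m_1-a),(d_1,a)$ with $0<a<m_1$): $\tau\le\lambda$ iff $\lambda$ is obtained from $\tau$ by a finite sequence of such operations. Its unique maximal element is $(d^1)=\{(d,1)\}$. A type is unramified if all second entries equal $1$, and ramified otherwise. The Möbius function $\mu_T$ is defined by $\sum_{\tau\le\kappa\le\lambda}\mu_T(\kappa,\lambda)=\delta_{\tau,\lambda}$ for $\tau\le\lambda$. *)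

From Stdlib Require Import Relations.
From mathcomp Require Import all_boot all_order all_algebra.
From mathcomp Require Import boolp.
Set Implicit Arguments. Unset Strict Implicit. Unset Printing Implicit Defensive.
Import GRing.Theory.

(* A type of degree d is a finite multiset of pairs (b,m) of positive
   integers with sum b*m = d.  Every such pair has b,m <= d and every
   multiplicity is <= d, so we encode a multiset as a multiplicity function
   on 'I_(d+1) x 'I_(d+1) with values in 'I_(d+1). *)
Definition pair_t (d : nat) := ('I_d.+1 * 'I_d.+1)%type.
Definition mtype (d : nat) := {ffun pair_t d -> 'I_d.+1}.

Definition mult (d : nat) (f : mtype d) (p : nat * nat) : nat :=
  if (p.1 <= d) && (p.2 <= d) then nat_of_ord (f (inord p.1, inord p.2)) else 0.

Definition is_type (d : nat) (f : mtype d) : bool :=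
  [forall p : pair_t d, (0 < f p) ==> (0 < p.1) && (0 < p.2)] &&
  ((\sum_(p : pair_t d) f p * p.1 * p.2)%N == d).

Definition Td (d : nat) := {f : mtype d | is_type f}.

Definition tmult (d : nat) (t : Td d) (p : nat * nat) : nat := mult (val t) p.

(* elementary merge: replace (d1,m),(d2,m) by (d1+d2,m) *)
Definition merge_step (d : nat) (t l : Td d) : Prop :=
  exists d1 d2 m : nat, [/\ 0 < d1, 0 < d2, 0 < m &
    forall p : nat * nat,
      tmult l p + (p == (d1, m)) + (p == (d2, m)) = tmult t p + (p == (d1 + d2, m))]%N.

(* elementary forget: replace (d1,m1) by (d1,m1-a),(d1,a), 0<a<m1 *)
Definition forget_step (d : nat) (t l : Td d) : Prop :=
  exists d1 m1 a : nat, [/\ 0 < d1, 0 < a & a < m1 /\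
    forall p : nat * nat,
      tmult l p + (p == (d1, m1)) = tmult t p + (p == (d1, m1 - a)) + (p == (d1, a))]%N.

Definition type_le (d : nat) : relation (Td d) :=
  clos_refl_trans (Td d) (fun t l => merge_step t l \/ forget_step t l).

Definition is_top (d : nat) (l : Td d) : Prop :=
  forall p : nat * nat, tmult l p = (p == (d, 1%N)).

Definition ramified (d : nat) (t : Td d) : Prop :=
  exists b m : nat, (0 < tmult t (b, m))%N /\ m <> 1%N.

Definition is_mobius (d : nat) (mu : Td d -> Td d -> int) : Prop :=
  forall t l : Td d, type_le t l ->
    (\sum_(k : Td d | `[< type_le t k /\ type_le k l >]) mu k l)%R
      = Posz (t == l).

From mathcomp Require Import all_boot all_order all_algebra.
From mathcomp Require Import boolp zify ring.
From Stdlib Require Import Relations.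

Set Implicit Arguments. Unset Strict Implicit. Unset Printing Implicit Defensive.
Import GRing.Theory.

(* A forget step leaves the unramification [u t] of a type unchanged (every
   part [(b, m)] becomes [m] parts [(b, 1)]) and a merge step moves it up, so
   [u] is monotone and [t <= u t]. Hence the unramified types above a ramified
   [tau] are exactly the types above [u tau], which is below but different from
   [(d^1)]. Since every step lowers a potential, induction shows that
   [mu k (d^1)] vanishes for ramified [k > tau]; the Moebius relation on
   [[tau, (d^1)]] then reduces to [mu tau (d^1)] plus the full Moebius sum over
   [[u tau, (d^1)]], which is zero because [u tau <> (d^1)]. *)

Section Types.
Variable d : nat.
Implicit Types (t k l : Td d) (g h F : nat * nat -> nat) (q : nat * nat).

Definition pair_nat (p : pair_t d) : nat * nat := (nat_of_ord p.1, nat_of_ord p.2).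

Lemma pair_nat_inj : injective pair_nat.
Proof. by case=> [a b] [c e] [/val_inj -> /val_inj ->]. Qed.

Lemma tmult_pair_nat t p : tmult t (pair_nat p) = val t p.
Proof.
have p1 : p.1 <= d := ltn_ord p.1; have p2 : p.2 <= d := ltn_ord p.2.
by rewrite /tmult /mult /= p1 p2 /= !inord_val -surjective_pairing.
Qed.

Lemma tmult_gt0 t q : 0 < tmult t q ->
  [/\ 0 < q.1, 0 < q.2, q.1 <= d & q.2 <= d].
Proof.
rewrite /tmult /mult; case: ifP => // /andP [h1 h2] pos.
have /andP [/forallP /(_ (inord q.1, inord q.2)) /implyP /(_ pos) /andP []] := valP t.
by rewrite /= !inordK ?ltnS.
Qed.

Lemma tmult_inj t l :
  (forall p, tmult t (pair_nat p) = tmult l (pair_nat p)) -> t = l.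
Proof.
move=> E; apply: val_inj; apply/ffunP => p; apply: val_inj.
by have := E p; rewrite !tmult_pair_nat.
Qed.

(* Only pairs in the box [0..d]^2 are counted; every type lives there. *)
Definition mass g F : nat := \sum_(p : pair_t d) g (pair_nat p) * F (pair_nat p).

Lemma eq_mass g h F : g =1 h -> mass g F = mass h F.
Proof. by move=> E; apply: eq_bigr => p _; rewrite E. Qed.

Lemma mass_add g h F : mass (fun q => g q + h q) F = mass g F + mass h F.
Proof. by rewrite /mass -big_split; apply: eq_bigr => p _; rewrite mulnDl. Qed.

Lemma mass_delta x F : x.1 <= d -> x.2 <= d -> mass (fun q => q == x) F = F x.
Proof.
move=> h1 h2; pose px : pair_t d := (inord x.1, inord x.2).
have px_x : pair_nat px = x by rewrite /pair_nat !inordK ?ltnS // -surjective_pairing.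
rewrite /mass (bigD1 px) //= px_x eqxx mul1n big1 ?addn0 // => p p_px.
suff /negbTE -> : pair_nat p != x by [].
by apply: contra p_px => /eqP px'; apply/eqP/pair_nat_inj; rewrite px_x.
Qed.

Lemma leq_mass g F p : g (pair_nat p) * F (pair_nat p) <= mass g F.
Proof. by rewrite /mass (bigD1 p) //= leq_addr. Qed.

Lemma mass_gt0 g F : 0 < mass g F ->
  exists p, 0 < g (pair_nat p) /\ 0 < F (pair_nat p).
Proof.
move=> pos; have [p] : exists p, 0 < g (pair_nat p) * F (pair_nat p).
  apply/existsP; apply: contraLR pos; rewrite negb_exists => /forallP gF0.
  by rewrite -eqn0Ngt sum_nat_eq0; apply/forallP => p; rewrite eqn0Ngt gF0.
by rewrite muln_gt0 => /andP; exists p.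
Qed.

Lemma mass_degree t : mass (tmult t) (fun q => q.1 * q.2) = d.
Proof.
have /andP [_ /eqP deg] := valP t.
by rewrite -[in RHS]deg; apply: eq_bigr => p _; rewrite tmult_pair_nat mulnA.
Qed.

Lemma type_of_mult g :
  (forall q, 0 < g q -> [/\ 0 < q.1, 0 < q.2, q.1 <= d & q.2 <= d]) ->
  mass g (fun q => q.1 * q.2) = d -> {t : Td d | tmult t =1 g}.
Proof.
move=> supp deg.
have g_le q : g q <= d.
  have [-> //|/supp [q1 q2 q1d q2d]] := posnP (g q).
  have := leq_mass g (fun q => q.1 * q.2) (inord q.1, inord q.2).
  rewrite deg /pair_nat !inordK ?ltnS // -surjective_pairing; apply: leq_trans.
  by rewrite leq_pmulr // muln_gt0 q1 q2.
pose f : mtype d := [ffun p => inord (g (pair_nat p))].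
have fE p : nat_of_ord (f p) = g (pair_nat p) by rewrite ffunE inordK ?ltnS.
have f_type : is_type f.
  apply/andP; split.
    by apply/forallP => p; apply/implyP; rewrite fE => /supp [-> ->].
  by apply/eqP; rewrite -[in RHS]deg; apply: eq_bigr => p _; rewrite fE mulnA.
exists (exist _ f f_type) => q; rewrite /tmult /mult /=.
case: ifP => [/andP [q1d q2d]|/negbT out].
  by rewrite fE /pair_nat !inordK ?ltnS // -surjective_pairing.
by have [//|/supp [_ _ q1d q2d]] := posnP (g q); rewrite q1d q2d in out.
Qed.

Lemma merge_step_gt0 t l d1 d2 m : 0 < d1 -> 0 < d2 ->
  (forall p, tmult l p + (p == (d1, m)) + (p == (d2, m))
             = tmult t p + (p == (d1 + d2, m))) ->
  [/\ 0 < tmult t (d1, m), 0 < tmult t (d2, m) & 0 < tmult l (d1 + d2, m)].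
Proof.
move=> d1_gt0 d2_gt0 E; split.
- by have := E (d1, m); rewrite !xpair_eqE !eqxx !andbT; lia.
- by have := E (d2, m); rewrite !xpair_eqE !eqxx !andbT; lia.
- by have := E (d1 + d2, m); rewrite !xpair_eqE !eqxx !andbT; lia.
Qed.

Lemma merge_mass t l d1 d2 m F : 0 < d1 -> 0 < d2 ->
  (forall p, tmult l p + (p == (d1, m)) + (p == (d2, m))
             = tmult t p + (p == (d1 + d2, m))) ->
  mass (tmult l) F + F (d1, m) + F (d2, m) = mass (tmult t) F + F (d1 + d2, m).
Proof.
move=> d1_gt0 d2_gt0 E; have [t1 t2 l12] := merge_step_gt0 d1_gt0 d2_gt0 E.
have [_ _ ? ?] := tmult_gt0 t1; have [_ _ ? ?] := tmult_gt0 t2.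
have [_ _ ? ?] := tmult_gt0 l12.
by have := eq_mass F E; rewrite !mass_add !mass_delta.
Qed.

Lemma forget_step_gt0 t l d1 m1 a : 0 < a -> a < m1 ->
  (forall p, tmult l p + (p == (d1, m1))
             = tmult t p + (p == (d1, m1 - a)) + (p == (d1, a))) ->
  0 < tmult t (d1, m1).
Proof. by move=> a_gt0 a_lt E; have := E (d1, m1); rewrite !xpair_eqE !eqxx /=; lia. Qed.

Lemma forget_mass t l d1 m1 a F : 0 < a -> a < m1 ->
  (forall p, tmult l p + (p == (d1, m1))
             = tmult t p + (p == (d1, m1 - a)) + (p == (d1, a))) ->
  mass (tmult l) F + F (d1, m1) = mass (tmult t) F + F (d1, m1 - a) + F (d1, a).
Proof.
move=> a_gt0 a_lt E; have [/= _ _ ? ?] := tmult_gt0 (forget_step_gt0 a_gt0 a_lt E).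
by have := eq_mass F E; rewrite !mass_add !mass_delta //=; lia.
Qed.

(* A merge lowers the sum of the second entries and a forget raises the sum
   of the first entries, so [rank] strictly decreases along every step. *)
Definition rank t : nat :=
  mass (tmult t) (fun q => q.2) + (d - mass (tmult t) (fun q => q.1)).

Lemma mass_fst_le t : mass (tmult t) (fun q => q.1) <= d.
Proof.
rewrite -{2}(mass_degree t); apply: leq_sum => p _.
have [->//|/tmult_gt0 [_ p2 _ _]] := posnP (tmult t (pair_nat p)).
by rewrite leq_mul2l leq_pmulr ?orbT.
Qed.

Lemma step_rank t l : merge_step t l \/ forget_step t l -> rank l < rank t.
Proof.
move=> step; have := mass_fst_le l; have := mass_fst_le t.
case: step => [[d1 [d2 [m [d1_gt0 d2_gt0 m_gt0 E]]]]
              | [d1 [m1 [a [d1_gt0 a_gt0 [a_lt E]]]]]].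
- have := merge_mass (fun q => q.1) d1_gt0 d2_gt0 E.
  have := merge_mass (fun q => q.2) d1_gt0 d2_gt0 E.
  rewrite /rank /=; lia.
- have := forget_mass (fun q => q.1) a_gt0 a_lt E.
  have := forget_mass (fun q => q.2) a_gt0 a_lt E.
  rewrite /rank /=; lia.
Qed.

Lemma type_le_rank t k : type_le t k -> t = k \/ rank k < rank t.
Proof.
elim=> [x y /step_rank | x | x y z _ [-> | lt_xy] _ [<- | lt_yz]];
  by [left | right | right; lia].
Qed.

Lemma merge_exists t d1 d2 m : 0 < d1 -> 0 < d2 ->
  (forall p, (p == (d1, m)) + (p == (d2, m)) <= tmult t p) ->
  exists l, forall p, tmult l p + (p == (d1, m)) + (p == (d2, m))
                      = tmult t p + (p == (d1 + d2, m)).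
Proof.
move=> d1_gt0 d2_gt0 le_t.
have /tmult_gt0 [/= _ m_gt0 d1_le m_le] : 0 < tmult t (d1, m).
  by apply: leq_trans (le_t (d1, m)); rewrite eqxx.
have /tmult_gt0 [/= _ _ d2_le _] : 0 < tmult t (d2, m).
  by apply: leq_trans (le_t (d2, m)); rewrite eqxx addn1.
pose g p := tmult t p - ((p == (d1, m)) + (p == (d2, m))).
have g_t p : g p + (p == (d1, m)) + (p == (d2, m)) = tmult t p.
  by rewrite -addnA subnK.
have := eq_mass (fun q => q.1 * q.2) g_t.
rewrite !mass_add !mass_delta // mass_degree /= => deg_g.
have d12_le : d1 + d2 <= d.
  by rewrite -deg_g -addnA -mulnDl (leq_trans (leq_pmulr _ m_gt0)) ?leq_addl.
have [l El] : {l : Td d | tmult l =1 (fun p => g p + (p == (d1 + d2, m)))}.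
  apply: type_of_mult => [q|].
    have [g0|/tmult_gt0 //] := posnP (tmult t q).
    by rewrite /g g0 sub0n add0n; case: eqP => // -> _; split=> //=; lia.
  by rewrite mass_add mass_delta //= -deg_g mulnDl addnA.
by exists l => p; rewrite El -(g_t p) -!addnA; congr (_ + _);
  rewrite addnCA [_ + (p == _)]addnC.
Qed.

Lemma forget_exists t b m a : 0 < a -> a < m -> 0 < tmult t (b, m) ->
  exists l, forall p, tmult l p + (p == (b, m))
                      = tmult t p + (p == (b, m - a)) + (p == (b, a)).
Proof.
move=> a_gt0 a_lt t_bm; have [/= b_gt0 _ b_le m_le] := tmult_gt0 t_bm.
pose g p := tmult t p - (p == (b, m)).
have g_t p : g p + (p == (b, m)) = tmult t p.
  by rewrite subnK //; case: eqP => // ->.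
have := eq_mass (fun q => q.1 * q.2) g_t.
rewrite mass_add mass_delta // mass_degree /= => deg_g.
have [l El] : {l : Td d | tmult l =1
    (fun p => g p + (p == (b, m - a)) + (p == (b, a)))}.
  apply: type_of_mult => [q|].
    have [t0|/tmult_gt0 //] := posnP (tmult t q).
    rewrite /g t0 sub0n add0n; case: eqP => [-> _|_]; first by split=> //=; lia.
    by case: eqP => // -> _; split=> //=; lia.
  by rewrite !mass_add !mass_delta //=; lia.
by exists l => p; rewrite El -(g_t p) -!addnA; congr (_ + _); rewrite addnA addnC.
Qed.

Definition unramified t := forall b m, 0 < tmult t (b, m) -> m = 1.

Lemma unramified_not_ramified t : unramified t <-> ~ ramified t.
Proof.
split=> [unr [b [m [t_bm m_neq1]]] | nram b m t_bm]; first exact/m_neq1/(unr b).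
by case: (m =P 1) => // m_neq1; case: nram; exists b, m.
Qed.

Lemma top_unramified top : is_top top -> unramified top.
Proof. by move=> htop b m; rewrite htop xpair_eqE; case: (m =P 1); rewrite ?andbF. Qed.

Lemma unramified_step t l :
  merge_step t l \/ forget_step t l -> unramified t -> unramified l.
Proof.
case=> [[d1 [d2 [m [d1_gt0 d2_gt0 _ E]]]] | [d1 [m1 [a [_ a_gt0 [a_lt E]]]]]] unr.
- have [/unr m_eq1 _ _] := merge_step_gt0 d1_gt0 d2_gt0 E.
  move=> b m' l_bm; have [[_ ->] //|ne] := eqVneq (b, m') (d1 + d2, m).
  by apply: (unr b); have := E (b, m'); rewrite (negbTE ne); lia.
- by have := unr _ _ (forget_step_gt0 a_gt0 a_lt E); lia.
Qed.

Lemma unramified_le t k : type_le t k -> unramified t -> unramified k.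
Proof. by elim=> // [x y /unramified_step | x y z _ IH1 _ IH2 /IH1 /IH2]. Qed.

(* Multiplicities of the unramification of [t], in which every part [(b, m)]
   of [t] is replaced by [m] parts [(b, 1)]. *)
Definition unram_mult t q : nat :=
  if q.2 == 1 then mass (tmult t) (fun p => (p.1 == q.1) * p.2) else 0.

Lemma unram_mult_sum t q : unram_mult t q =
  \sum_(p : pair_t d) tmult t (pair_nat p) * (pair_nat p).2 * (q == ((pair_nat p).1, 1)).
Proof.
case: q => b m; rewrite /unram_mult /mass /=; case: eqP => [->|m_neq1].
  apply: eq_bigr => p _.
  by rewrite xpair_eqE eqxx andbT eq_sym mulnAC mulnA.
by rewrite big1 // => p _; rewrite xpair_eqE (introF eqP m_neq1) andbF muln0.
Qed.

Hypothesis d_gt0 : 0 < d.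

Lemma unram_mult_gt0 t q : 0 < unram_mult t q ->
  [/\ 0 < q.1, 0 < q.2, q.1 <= d & q.2 <= d].
Proof.
rewrite /unram_mult; case: eqP => // -> /mass_gt0 [p [/tmult_gt0 [p1_gt0 _ p1_le _]]].
by rewrite muln_gt0 lt0b => /andP [/eqP <- _]; split.
Qed.

Lemma unram_mult_degree t : mass (unram_mult t) (fun q => q.1 * q.2) = d.
Proof.
rewrite -[RHS](mass_degree t) (eq_mass _ (unram_mult_sum t)) /mass.
under eq_bigr do rewrite big_distrl /=.
rewrite exchange_big; apply: eq_bigr => p _ /=.
under eq_bigr do rewrite -mulnA.
rewrite -big_distrr /=.
have := @mass_delta ((pair_nat p).1, 1) (fun q => q.1 * q.2) (ltn_ord p.1) d_gt0.
rewrite /mass => -> /=.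
by rewrite muln1 -mulnA [p.1 * _]mulnC.
Qed.

Definition unramify t : Td d :=
  sval (type_of_mult (@unram_mult_gt0 t) (unram_mult_degree t)).

Lemma tmult_unramify t : tmult (unramify t) =1 unram_mult t.
Proof. exact: svalP (type_of_mult _ _). Qed.

Lemma unramify_unramified t : unramified (unramify t).
Proof. by move=> b m; rewrite tmult_unramify /unram_mult /=; case: eqP. Qed.

Lemma unramify_id t : unramified t -> unramify t = t.
Proof.
move=> unr; apply: tmult_inj => p; rewrite tmult_unramify /unram_mult.
have [p2|p2_neq1] := eqP.
  rewrite -(@mass_delta (pair_nat p) (tmult t) (ltn_ord p.1) (ltn_ord p.2)).
  apply: eq_bigr => p' _.
  have [->|] := posnP (tmult t (pair_nat p')); first by rewrite muln0 mul0n.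
  move: p2; rewrite /pair_nat /= => -> /unr ->.
  by rewrite xpair_eqE eqxx andbT muln1 mulnC.
by have [//|] := posnP (tmult t (pair_nat p)); rewrite /pair_nat => /unr.
Qed.

Lemma forget_unramify t l : forget_step t l -> unramify l = unramify t.
Proof.
move=> [d1 [m1 [a [_ a_gt0 [a_lt E]]]]]; apply: tmult_inj => p.
rewrite !tmult_unramify /unram_mult; case: eqP => // _.
have := forget_mass (fun q => (q.1 == (pair_nat p).1) * q.2) a_gt0 a_lt E.
by rewrite /=; case: (d1 == _) => /=; lia.
Qed.

Lemma merge_unram_mult t l d1 d2 m : 0 < d1 -> 0 < d2 ->
  (forall p, tmult l p + (p == (d1, m)) + (p == (d2, m))
             = tmult t p + (p == (d1 + d2, m))) ->
  forall q, unram_mult l q + m * (q == (d1, 1)) + m * (q == (d2, 1))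
            = unram_mult t q + m * (q == (d1 + d2, 1)).
Proof.
move=> d1_gt0 d2_gt0 E [b [|[|c]]]; rewrite /unram_mult /= !xpair_eqE /= ?andbF ?muln0 //.
have := merge_mass (fun q => (q.1 == b) * q.2) d1_gt0 d2_gt0 E.
by rewrite /= !andbT !(eq_sym b); lia.
Qed.

Lemma merge_parts_le d1 d2 j h (a b : Td d) : 0 < d1 -> 0 < d2 ->
  (forall q, tmult a q = h q + j * (q == (d1, 1)) + j * (q == (d2, 1))) ->
  (forall q, tmult b q = h q + j * (q == (d1 + d2, 1))) -> type_le a b.
Proof.
move=> d1_gt0 d2_gt0; elim: j h a => [|j IH] h a Ea Eb.
  have -> : a = b by apply: tmult_inj => q; rewrite Ea Eb !mul0n !addn0.
  exact: rt_refl.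
have le_a q : (q == (d1, 1)) + (q == (d2, 1)) <= tmult a q.
  by rewrite Ea -addnA (leq_trans _ (leq_addl _ _)) // leq_add // leq_pmull.
have [c Ec] := merge_exists d1_gt0 d2_gt0 le_a.
apply: rt_trans (rt_step _ _ _ _ (or_introl _))
                (IH (fun q => h q + (q == (d1 + d2, 1))) c _ _).
- by exists d1, d2, 1.
- move=> q; apply/eqP.
  rewrite -(eqn_add2r ((q == (d1, 1)) + (q == (d2, 1)))) addnA Ec Ea.
  by apply/eqP; ring.
- by move=> q; rewrite Eb mulSn addnA.
Qed.

Lemma unramify_mono t k : type_le t k -> type_le (unramify t) (unramify k).
Proof.
elim=> [x y [[d1 [d2 [m [d1_gt0 d2_gt0 _ E]]]] | /forget_unramify ->]
       | x | x y z _ IH1 _ IH2].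
- have U := merge_unram_mult d1_gt0 d2_gt0 E.
  have le_y q : m * (q == (d1 + d2, 1)) <= unram_mult y q.
    case: (q =P (d1 + d2, 1)) => [->|_]; last by rewrite muln0.
    by have := U (d1 + d2, 1); rewrite !xpair_eqE !eqxx /= !andbT; lia.
  apply: (@merge_parts_le d1 d2 m
            (fun q => unram_mult y q - m * (q == (d1 + d2, 1)))) => // q.
    apply/eqP; rewrite tmult_unramify -(eqn_add2r (m * (q == (d1 + d2, 1)))) -U.
    by rewrite -{1}(subnK (le_y q)); move: (_ - _) => h; apply/eqP; ring.
  by rewrite tmult_unramify subnK.
- exact: rt_refl.
- exact: rt_refl.
- exact: rt_trans IH1 IH2.
Qed.

Definition excess t : nat := mass (tmult t) (fun q => q.2 - 1).

Lemma ramified_forget t : ramified t ->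
  exists2 l, forget_step t l & excess l < excess t.
Proof.
move=> [b [m [t_bm m_neq1]]]; have [/= b_gt0 m_gt0 _ _] := tmult_gt0 t_bm.
have m_gt1 : 1 < m by lia.
have [l El] := forget_exists (ltnSn 0) m_gt1 t_bm.
exists l; first by exists b, m, 1.
by have := forget_mass (fun q => q.2 - 1) (ltnSn 0) m_gt1 El; rewrite /excess /=; lia.
Qed.

Lemma le_unramify t : type_le t (unramify t).
Proof.
have [n] := ubnP (excess t); elim: n t => // n IH t lt_tn.
have [ram|/unramified_not_ramified unr] := pselect (ramified t); last first.
  by rewrite unramify_id //; apply: rt_refl.
have [l forget lt_lt] := ramified_forget ram.
rewrite -(forget_unramify forget).
by apply: rt_trans (rt_step _ _ _ _ (or_intror forget)) (IH l _); lia.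
Qed.

Lemma unramify_le t k : unramified k -> type_le (unramify t) k <-> type_le t k.
Proof.
move=> unr; split=> [|le_tk]; first exact: rt_trans (le_unramify t).
by rewrite -(unramify_id unr); apply: unramify_mono.
Qed.

Lemma unramify_neq_top top t : is_top top -> ramified t -> unramify t != top.
Proof.
move=> htop [b [m [t_bm m_neq1]]]; apply/eqP => u_top.
have [/= _ m_gt0 b_le m_le] := tmult_gt0 t_bm.
have := leq_mass (tmult t) (fun q => (q.1 == b) * q.2) (inord b, inord m).
rewrite /pair_nat /= !inordK ?ltnS // eqxx mul1n.
have := tmult_unramify t (b, 1); rewrite u_top htop /unram_mult /= => <-.
have := leq_mul t_bm (_ : 1 < m); case: (_ == _); lia.
Qed.

Lemma single_part_top top t b : is_top top ->
  (forall p, tmult t (pair_nat p) = (pair_nat p == (b, 1))) -> t = top.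
Proof.
move=> htop Et.
have deg : mass (fun q => q == (b, 1)) (fun q => q.1 * q.2) = d.
  by rewrite -[RHS](mass_degree t); apply: eq_bigr => p _; rewrite Et.
have [b_le|b_gt] := leqP b d.
  rewrite mass_delta //= muln1 in deg; rewrite deg in Et.
  by apply: tmult_inj => p; rewrite Et htop.
rewrite /mass big1 in deg => [|p _]; first by move: d_gt0; rewrite -[X in 0 < X]deg.
by rewrite xpair_eqE ltn_eqF ?mul0n // (leq_trans (ltn_ord p.1)).
Qed.

Lemma unramified_top_or_merge top t : is_top top -> unramified t ->
  t = top \/ exists b1 b2, [/\ 0 < b1, 0 < b2 &
    forall q, (q == (b1, 1)) + (q == (b2, 1)) <= tmult t q].
Proof.
move=> htop unr.
have /mass_gt0 [p1 [t_p1 _]] : 0 < mass (tmult t) (fun q => q.1 * q.2).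
  by rewrite mass_degree.
move: t_p1; rewrite /pair_nat; set b1 := nat_of_ord p1.1; move=> t_p1.
have p1_2 := unr _ _ t_p1; rewrite p1_2 in t_p1.
have [/= b1_gt0 _ _ _] := tmult_gt0 t_p1.
pose g q := tmult t q - (q == (b1, 1)).
have g_t q : g q + (q == (b1, 1)) = tmult t q by rewrite subnK //; case: eqP => // ->.
have [g0|/mass_gt0 [p2 [g_p2 _]]] := posnP (mass g (fun=> 1)).
  left; apply: (single_part_top (b := b1) htop) => p.
  by rewrite -g_t; have := leq_mass g (fun=> 1) p; rewrite g0 muln1 leqn0 => /eqP ->.
right; move: g_p2; rewrite /pair_nat; set b2 := nat_of_ord p2.1; move=> g_p2.
have t_p2 := leq_trans g_p2 (leq_subr _ _).
have p2_2 := unr _ _ t_p2; rewrite p2_2 in g_p2 t_p2.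
have [/= b2_gt0 _ _ _] := tmult_gt0 t_p2.
exists b1, b2; split=> // q; rewrite -g_t addnC leq_add2r.
by case: eqP => [->|].
Qed.

Definition parts t : nat := mass (tmult t) (fun=> 1).

Lemma unramified_le_top top t : is_top top -> unramified t -> type_le t top.
Proof.
move=> htop; have [n] := ubnP (parts t); elim: n t => // n IH t lt_tn unr.
have [->|[b1 [b2 [b1_gt0 b2_gt0 le_t]]]] := unramified_top_or_merge htop unr.
  exact: rt_refl.
have [c Ec] := merge_exists b1_gt0 b2_gt0 le_t.
have merge : merge_step t c by exists b1, b2, 1.
apply: rt_trans (rt_step _ _ _ _ (or_introl merge)) (IH c _ _).
  by have := merge_mass (fun=> 1) b1_gt0 b2_gt0 Ec; rewrite /parts /= in lt_tn *; lia.
exact: unramified_step (or_introl merge) unr.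
Qed.

Lemma unramify_interval t k : ramified t ->
  [/\ type_le t k, k != t & ~ ramified k] <-> type_le (unramify t) k.
Proof.
move=> ram; split=> [[le_tk _ /unramified_not_ramified unr] | le_uk].
  by apply/unramify_le.
have unr := unramified_le le_uk (@unramify_unramified t).
split; first exact/(unramify_le _ unr).
  by apply: contraPneq ram => <-; apply/unramified_not_ramified.
exact/unramified_not_ramified.
Qed.

End Types.

Section Mobius.
Local Open Scope ring_scope.

(* The defining sum of [mu] over [[t, top]] splits into [mu t top], the
   vanishing [P]-part, and the defining sum over [[u, top]], which is [0]. *)
Lemma mobius_eq0_of_split d (mu : Td d -> Td d -> int) (P : Td d -> Prop)
    (t u top : Td d) :
  is_mobius mu -> type_le t top -> t != top -> type_le u top -> u != top ->
  (forall k, type_le t k -> type_le k top -> k != t -> P k -> mu k top = 0) ->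
  (forall k, [/\ type_le t k, k != t & ~ P k] <-> type_le u k) ->
  mu t top = 0.
Proof.
move=> hmu le_t t_top le_u u_top P0 upper.
have := hmu t top le_t; rewrite (negbTE t_top) (bigD1 t) /=; last first.
  by apply/asboolP; split=> //; apply: rt_refl.
rewrite (bigID (fun k => `[< P k >])) /= big1 ?add0r; last first.
  by move=> k /andP [/andP [/asboolP [le_tk le_k] k_t] /asboolP]; apply: P0.
rewrite (eq_bigl (fun k => `[< type_le u k /\ type_le k top >])) => [|k].
  by rewrite (hmu u top le_u) (negbTE u_top) addr0.
apply/idP/asboolP => [/andP [/andP [/asboolP [le_tk le_k] k_t] /asboolPn nP]|].
  by split=> //; apply/upper.
move=> [/upper [le_tk k_t nP] le_k]; rewrite k_t andbT.
by apply/andP; split; apply/asboolP.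
Qed.

End Mobius.

Theorem proposition4 (d : nat) (hd : (0 < d)%N) (mu : Td d -> Td d -> int)
  (hmu : is_mobius mu) (tau top : Td d) (htop : is_top top)
  (hram : ramified tau) : mu tau top = 0%R.
Proof.
have [n] := ubnP (rank tau); elim: n tau hram => // n IH t ram lt_tn.
have t_top : t != top.
  by apply: contraPneq ram => ->; apply/unramified_not_ramified/top_unramified.
have le_u_top := unramified_le_top hd htop (@unramify_unramified d hd t).
apply: (mobius_eq0_of_split (P := @ramified d) hmu _ t_top le_u_top).
- exact: rt_trans (le_unramify hd t) le_u_top.
- exact: unramify_neq_top.
- move=> k le_tk _ k_t ram_k; apply: IH ram_k _.
  by case: (type_le_rank le_tk) => [k_eq|]; [rewrite k_eq eqxx in k_t | lia].
- by move=> k; apply: unramify_interval.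
Qed.
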